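(* Let $s,k$ be positive integers and $\epsilon\in(0,1)$. Then for all sufficiently large $n$ there exist sets $A,B\subseteq\mathbb{Z}$ with $|A|=|B|=n$ and $|A+B|>kn$ such that for every subset $B_{(s)}\subseteq B$ with $|B_{(s)}|\le s$ we have $|A+B_{(s)}|\le(2+\epsilon)n$.
   Context: For subsets $X,Y$ of an abelian group, $X+Y=\{x+y:x\in X,y\in Y\}$. *)

From HB Require Import structures.
From mathcomp Require Import all_boot all_order all_algebra.
From mathcomp Require Import finmap.
From mathcomp Require Import reals.
Set Implicit Arguments. Unset Strict Implicit. Unset Printing Implicit Defensive.
Import Order.TTheory GRing.Theory Num.Theory.
Local Open Scope fset_scope.

Definition sumset (X Y : {fset int}) : {fset int} :=
  [fset (x + y)%R | x in X, y in Y].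

From HB Require Import structures.
From mathcomp Require Import all_boot all_order all_algebra.
From mathcomp Require Import finmap.
From mathcomp Require Import reals.
From mathcomp Require Import zify.
Import Order.TTheory GRing.Theory Num.Theory.
Local Open Scope fset_scope.

(* Take B = [0, n) and A = [0, n - t) together with t far-apart points 3n, 6n, ..., 3tn.
   Each far point contributes its own translate of B to A + B, so |A + B| >= t n > k n
   for t = k + 1.  For a small B' of B, A + B' lies in [0, 2n) apart from the at most
   t |B'| <= t s sums of a far point with B', and t s <= eps n once n is large. *)

Lemma card_sumset_le (X Y : {fset int}) : (#|` sumset X Y| <= #|` X| * #|` Y|)%N.
Proof.
rewrite /sumset unlock /= size_seq_fset (leq_trans (size_undup _)) //.
by rewrite size_allpairs.
Qed.

Lemma sumsetUl (X X' Y : {fset int}) :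
  sumset (X `|` X') Y = sumset X Y `|` sumset X' Y.
Proof.
apply/fsetP => z; rewrite in_fsetU; apply/imfset2P/orP => /=.
  by case=> x; rewrite in_fsetU => /orP[xX|xX] [y yY ->];
    [left|right]; apply: in_imfset2.
by case=> /imfset2P[x xX [y yY ->]]; exists x; rewrite ?in_fsetU ?xX ?orbT //;
  exists y.
Qed.

Lemma sumsetSl (X X' Y : {fset int}) : X `<=` X' -> sumset X Y `<=` sumset X' Y.
Proof.
move=> sXX'; apply/fsubsetP => z /imfset2P[x xX [y yY ->]].
by apply: in_imfset2 => //; apply: (fsubsetP sXX').
Qed.

Definition zrange (m : nat) : {fset int} := [fset Posz (nat_of_ord i) | i : 'I_m].

Lemma mem_zrange m x :
  reflect (exists2 i : nat, (i < m)%N & x = Posz i) (x \in zrange m).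
Proof.
apply: (iffP (imfsetP _ _ _ _)) => [[i _ ->]|[i im ->]]; first by exists i.
by exists (Ordinal im).
Qed.

Lemma card_zrange m : #|` zrange m| = m.
Proof.
rewrite card_imfset /= ?size_enum_ord //.
by move=> i j /= [] /val_inj.
Qed.

Lemma zrangeS m m' : (m <= m')%N -> zrange m `<=` zrange m'.
Proof.
move=> mm'; apply/fsubsetP => _ /mem_zrange[i im ->].
by apply/mem_zrange; exists i => //; apply: leq_trans mm'.
Qed.

Lemma sumset_zrange a {b} {Y : {fset int}} :
  Y `<=` zrange b -> sumset (zrange a) Y `<=` zrange (a + b).
Proof.
move=> sYb; apply/fsubsetP => z /imfset2P[x /mem_zrange[i ia ->] [y yY ->]].
have /mem_zrange[j jb ->] := fsubsetP sYb y yY.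
by apply/mem_zrange; exists (i + j)%N; [lia | rewrite PoszD].
Qed.

Definition spread (n t : nat) : {fset int} :=
  [fset Posz ((3 * (nat_of_ord i).+1) * n) | i : 'I_t].

Lemma mem_spread n t x :
  reflect (exists2 i : nat, (i < t)%N & x = Posz ((3 * i.+1) * n)) (x \in spread n t).
Proof.
apply: (iffP (imfsetP _ _ _ _)) => [[i _ ->]|[i im ->]]; first by exists i.
by exists (Ordinal im).
Qed.

Lemma card_spread n t : (0 < n)%N -> #|` spread n t| = t.
Proof.
move=> n0; rewrite card_imfset /= ?size_enum_ord //.
move=> i j /= [] /eqP; rewrite eqn_pmul2r // eqn_pmul2l // eqSS => /eqP.
exact: val_inj.
Qed.

Lemma zrange_spread_disjoint m n t : (m <= n)%N -> zrange m `&` spread n t = fset0.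
Proof.
move=> mn; apply/fsetP => x; rewrite in_fsetI in_fset0.
apply/negbTE/andP => -[/mem_zrange[i im ->] /mem_spread[j _ /eqP]].
rewrite eqz_nat => /eqP ij; move: im; rewrite ij.
have : (n <= (3 * j.+1) * n)%N by rewrite leq_pmull.
lia.
Qed.

Lemma card_sumset_spread_zrange n t :
  (0 < n)%N -> #|` sumset (spread n t) (zrange n)| = (t * n)%N.
Proof.
move=> n0.
have -> : sumset (spread n t) (zrange n) =
    [fset Posz ((3 * (val p.1).+1) * n + val p.2) | p : 'I_t * 'I_n].
  apply/fsetP => z; apply/imfset2P/imfsetP => /=.
    case=> _ /mem_spread[i it ->] [_ /mem_zrange[j jn ->] ->].
    by exists (Ordinal it, Ordinal jn); rewrite //= PoszD.
  case=> -[i j] _ ->; exists (Posz ((3 * (val i).+1) * n)).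
    by apply/mem_spread; exists i.
  by exists (Posz j); [apply/mem_zrange; exists j | rewrite PoszD].
rewrite card_imfset /=; first by rewrite -cardE card_prod !card_ord.
(* Quotient and remainder modulo n recover the pair. *)
move=> [i j] [i' j'] /= [] E.
have := congr1 (divn^~ n) E; have := congr1 (modn^~ n) E.
rewrite /= !divnMDl // !modnMDl !divn_small // !modn_small // !addn0.
by move=> /val_inj -> /eqP; rewrite eqn_pmul2l // eqSS => /eqP /val_inj ->.
Qed.

Definition zrange_spread (n t : nat) : {fset int} := zrange (n - t) `|` spread n t.

Lemma card_zrange_spread n t : (0 < n)%N -> (t <= n)%N -> #|` zrange_spread n t| = n.
Proof.
move=> n_gt0 t_le_n.
by rewrite cardfsU card_zrange card_spread // zrange_spread_disjoint ?leq_subr //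
  cardfs0 subn0 subnK.
Qed.

Lemma card_sumset_zrange_spread_ge {n} t :
  (0 < n)%N -> (t * n <= #|` sumset (zrange_spread n t) (zrange n)|)%N.
Proof.
move=> n_gt0; rewrite -card_sumset_spread_zrange //; apply: fsubset_leq_card.
by apply: sumsetSl; rewrite fsubsetUr.
Qed.

Lemma card_sumset_zrange_spread_le {n} t {Bs : {fset int}} :
  (0 < n)%N -> Bs `<=` zrange n ->
  (#|` sumset (zrange_spread n t) Bs| <= 2 * n + t * #|` Bs|)%N.
Proof.
move=> n_gt0 sBn; rewrite sumsetUl; apply: (leq_trans (leq_card_fsetU _ _)).
apply: leq_add; last by apply: leq_trans (card_sumset_le _ _) _; rewrite card_spread.
rewrite -[X in (_ <= X)%N]card_zrange; apply: fsubset_leq_card.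
apply: (fsubset_trans (sumset_zrange (n - t) sBn)); apply: zrangeS.
by rewrite mul2n -addnn leq_add2r leq_subr.
Qed.

Lemma nat_le_two_plus_eps_mul {R : realFieldType} {eps : R} (m n : nat) :
  (0 < eps)%R -> (m%:R / eps < n%:R)%R -> ((2 * n + m)%:R <= (2 + eps) * n%:R :> R)%R.
Proof.
move=> eps_gt0; rewrite ltr_pdivrMr // => /ltW m_le.
by rewrite natrD natrM [((2 + eps) * _)%R]mulrDl lerD2l mulrC.
Qed.

Theorem proposition2p5 (R : realType) (s k : nat) (eps : R) :
  (0 < s)%N -> (0 < k)%N -> (0 < eps)%R -> (eps < 1)%R ->
  exists N : nat, forall n : nat, (N <= n)%N ->
    exists A B : {fset int},
      [/\ #|` A| = n, #|` B| = n,
          (k * n < #|` sumset A B|)%N &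
          forall Bs : {fset int}, Bs `<=` B -> (#|` Bs| <= s)%N ->
            ((#|` sumset A Bs|)%:R <= (2 + eps) * n%:R :> R)%R].
Proof.
move=> _ _ eps_gt0 _.
pose t := k.+1.
exists (maxn t (Num.truncn ((t * s)%:R / eps)).+1) => n.
rewrite geq_max => /andP[tn Nn].
have n_gt0 : (0 < n)%N by apply: leq_trans tn.
exists (zrange_spread n t), (zrange n); split.
- exact: card_zrange_spread.
- exact: card_zrange.
- by apply: leq_trans (card_sumset_zrange_spread_ge t n_gt0); rewrite ltn_pmul2r.
- move=> Bs sBn cBs.
  apply: (le_trans _ (nat_le_two_plus_eps_mul (t * s) n eps_gt0 _)).
    rewrite ler_nat (leq_trans (card_sumset_zrange_spread_le t n_gt0 sBn)) //.
    by rewrite leq_add2l leq_mul2l cBs orbT.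
  by apply: lt_le_trans (truncnS_gt _) _; rewrite ler_nat.
Qed.
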